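(* For each integer $k\ge 2$, the graph $\Theta(2,2,2k)$ is chromatic-choosable, but it is not weakly enumeratively chromatic-choosable.
   Context: $\Theta(l_1,l_2,l_3)$ denotes the graph consisting of two end vertices joined by three internally disjoint paths of lengths $l_1,l_2,l_3$. A graph $G$ is chromatic-choosable if its list chromatic number $\chi_\ell(G)$ equals its chromatic number $\chi(G)$. For a list assignment $L$, $P(G,L)$ is the number of proper $L$-colorings; an $m$-assignment assigns lists of size $m$ to every vertex; $P(G,m)$ is the chromatic polynomial and $P_\ell(G,m)$, the list color function, is the minimum of $P(G,L)$ over all $m$-assignments $L$. A graph $G$ is weakly enumeratively chromatic-choosable if $P_\ell(G,\chi(G))=P(G,\chi(G))$. *)

From mathcomp Require Import all_boot.
Set Implicit Arguments. Unset Strict Implicit. Unset Printing Implicit Defensive.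

Definition is_min (P : nat -> Prop) (n : nat) : Prop :=
  P n /\ forall m, P m -> n <= m.

Section Coloring.
Variables (V : finType) (adj : rel V).

Definition proper (C : Type) (f : V -> C) : Prop :=
  forall x y, adj x y -> f x <> f y.

Definition properb (m : nat) (f : {ffun V -> 'I_m}) : bool :=
  [forall x, forall y, adj x y ==> (f x != f y)].

Definition chrom_poly (m : nat) : nat := #|[set f : {ffun V -> 'I_m} | properb f]|.

Definition colorable (m : nat) : bool := 0 < chrom_poly m.

(* chromatic number chi(G): least m such that G is m-colorable (G is always |V|-colorable) *)
Definition chi : nat :=
  \big[minn/#|V|]_(m < #|V|.+1 | colorable m) (m : nat).

Definition m_assignment (m : nat) (L : V -> seq nat) : Prop :=
  forall x, uniq (L x) /\ size (L x) = m.

Definition choosable (m : nat) : Prop :=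
  forall L, m_assignment m L ->
    exists f : V -> nat, proper f /\ forall x, f x \in L x.

Definition list_chromatic_number_is (n : nat) : Prop := is_min choosable n.

(* P(G,L): number of proper L-colorings. Colors used are < bound L. *)
Definition bound (L : V -> seq nat) : nat := \max_(x : V) \max_(c <- L x) c.+1.
Definition P_list (L : V -> seq nat) : nat :=
  #|[set f : {ffun V -> 'I_(bound L)} | properb f &&
       [forall x, (val (f x)) \in L x]]|.

Definition list_color_function_is (m p : nat) : Prop :=
  is_min (fun q => exists L, m_assignment m L /\ P_list L = q) p.

Definition chromatic_choosable : Prop := list_chromatic_number_is chi.

Definition weakly_enum_chromatic_choosable : Prop :=
  list_color_function_is chi (chrom_poly chi).

End Coloring.

(* Theta(l1,l2,l3): vertices 0 and 1 are the end vertices; path j is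
   0 :: (lj - 1 fresh internal vertices) ++ [:: 1]. Vertex set {0,..,l1+l2+l3-2}. *)
Definition theta_paths (l1 l2 l3 : nat) : seq (seq nat) :=
  [:: 0 :: rcons (iota 2 l1.-1) 1;
      0 :: rcons (iota l1.+1 l2.-1) 1;
      0 :: rcons (iota (l1 + l2) l3.-1) 1].

Definition theta_edge_nat (l1 l2 l3 : nat) (a b : nat) : bool :=
  has (fun p => ((a, b) \in zip p (behead p)) || ((b, a) \in zip p (behead p)))
      (theta_paths l1 l2 l3).

Definition theta_V (l1 l2 l3 : nat) : finType := 'I_(l1 + l2 + l3 - 1).

Definition theta_adj (l1 l2 l3 : nat) : rel (theta_V l1 l2 l3) :=
  fun x y => theta_edge_nat l1 l2 l3 (val x) (val y).
Arguments theta_adj : clear implicits.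

From HB Require Import structures.
From Pilot Require Import Defs.
From mathcomp Require Import all_boot zify.

Set Implicit Arguments. Unset Strict Implicit. Unset Printing Implicit Defensive.

(* Theta(2,2,2k) is the even path 0 = v_0, v_1, ..., v_2k = 1 plus two vertices
   2 and 3 adjacent to both ends; it is bipartite, so chi = 2 and it has at
   least two proper 2-colorings.

   Along a path whose inner vertices carry 2-lists, a color c at v_0 either
   forces a unique color at v_i or leaves both colors of L(v_i) available, and
   v_2k can then receive any color except the one possibly forced at v_2k-1.
   If both colors s, t of L(0) force colors all the way, these alternate, so
   at the odd position 2k-1 they are t and s.  This leaves, among the four
   pairs of end colors in L(0) x L(1), one that is compatible with the path
   and with the lists of 2 and 3: the graph is 2-choosable.

   With the lists {0,1} at 0, 2, 4, {0,2} at 1 and 2k+2, {1,2} elsewhere, the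
   vertices 0..3 force color 0 at vertex 0, which forces 1, 2, 1, ..., 2, 0
   along the path and then 2 at vertex 1 and 1 at vertices 2 and 3.  This
   2-assignment has at most one coloring, fewer than P(G, 2). *)

(* [minn] has no unit on [nat], but as a commutative semigroup law it still
   supports [bigD1] on the [\big[minn/#|V|]] defining [chi]. *)
HB.instance Definition _ := SemiGroup.isComLaw.Build nat minn minnA minnC.

Section ColoringFacts.
Variables (V : finType) (adj : rel V).

Lemma properbP m (f : {ffun V -> 'I_m}) : reflect (Defs.proper adj f) (properb adj f).
Proof.
apply: (iffP forallP) => [f_proper x y xy | f_proper x]; last first.
  by apply/forallP => y; apply/implyP => /f_proper/eqP.
by apply/eqP; move/forallP: (f_proper x) => /(_ y)/implyP; apply.
Qed.

Lemma chi_leq m : colorable adj m -> chi adj <= m.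
Proof.
rewrite /chi; case: (ltnP m #|V|.+1) => [lt_m | le_m] col_m.
  by rewrite (bigD1 (Ordinal lt_m)) //= geq_minl.
apply: leq_trans (ltnW le_m).
apply: (big_ind (fun c => c <= #|V|)) => // [a b a_le _|i _]; first by rewrite geq_min a_le.
by rewrite -ltnS.
Qed.

Lemma colorable_of_choosable m : choosable adj m -> colorable adj m.
Proof.
case/(_ (fun=> iota 0 m)) => [x|f [f_proper f_lt]]; first by rewrite iota_uniq size_iota.
have lt_m x : f x < m by have := f_lt x; rewrite mem_iota.
apply/card_gt0P; exists [ffun x => Ordinal (lt_m x)]; rewrite inE.
by apply/properbP => x y /f_proper; rewrite !ffunE => fxy /(congr1 val).
Qed.

Lemma chromatic_choosable_of_choosable : choosable adj (chi adj) -> chromatic_choosable adj.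
Proof. by split=> // m /colorable_of_choosable/chi_leq. Qed.

Lemma colorable_gt1 m x y : adj x y -> colorable adj m -> 1 < m.
Proof.
move=> xy /card_gt0P[f]; rewrite inE => /properbP/(_ x y xy)/eqP fxy.
by rewrite -[m]card_ord; apply/card_gt1P; exists (f x), (f y).
Qed.

Lemma chi_eq2 x y : adj x y -> colorable adj 2 -> chi adj = 2.
Proof.
move=> xy col2; apply/eqP; rewrite eqn_leq chi_leq //=.
have x_neq_y : x != y.
  have /card_gt0P[f] := col2; rewrite inE => /properbP/(_ x y xy).
  by apply: contra_notN => /eqP->.
apply: (big_ind (fun c => 1 < c)) => [|a b|i]; last exact: colorable_gt1 xy.
  by apply/card_gt1P; exists x, y.
by rewrite leq_min => -> ->.
Qed.

Lemma chrom_poly2_gt1 (c : V -> bool) (x : V) : Defs.proper adj c -> 1 < chrom_poly adj 2.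
Proof.
move=> c_proper.
pose col b : {ffun V -> 'I_2} := [ffun v => @Ordinal 2 (c v (+) b) (leq_b1 _)].
have col_proper b : properb adj (col b).
  apply/properbP => u v /c_proper cuv; rewrite !ffunE => /(congr1 val) /=.
  by move: cuv; case: (c u); case: (c v); case: b.
apply/card_gt1P; exists (col false), (col true); rewrite !inE !col_proper.
by split=> //; apply/eqP => /ffunP/(_ x)/(congr1 val); rewrite !ffunE /=; case: (c x).
Qed.

Lemma not_weakly_enum_chromatic_choosable L :
  m_assignment (chi adj) L -> P_list adj L < chrom_poly adj (chi adj) ->
  ~ weakly_enum_chromatic_choosable adj.
Proof.
by move=> L_chi lt_P [_ /(_ _ (ex_intro _ L (conj L_chi erefl)))]; rewrite leqNgt lt_P.
Qed.

End ColoringFacts.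

Section NatLabelledGraph.
Variables (n : nat) (e : rel nat) (adj : rel 'I_n).
Hypothesis adjE : forall x y, adj x y = e x y.

Definition ord_extend T (d : T) (f : 'I_n -> T) (a : nat) : T :=
  if insub a is Some x then f x else d.

Lemma ord_extendE T (d : T) f (x : 'I_n) : ord_extend d f x = f x.
Proof. by rewrite /ord_extend valK. Qed.

Definition nat_list_coloring (L : nat -> seq nat) (g : nat -> nat) : Prop :=
  (forall a b, a < n -> b < n -> e a b -> g a != g b) /\
  (forall a, a < n -> g a \in L a).

Lemma choosable_of_nat m :
    (forall L, (forall a, uniq (L a) /\ size (L a) = m) ->
       exists g, nat_list_coloring L g) ->
  choosable adj m.
Proof.
move=> nat_choosable L L_m.
have [|g [g_proper g_L]] := nat_choosable (ord_extend (iota 0 m) L).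
  by move=> a; rewrite /ord_extend; case: insub => [x|]; rewrite ?iota_uniq ?size_iota.
exists (fun x : 'I_n => g x); split=> [x y|x].
  by rewrite adjE => /(g_proper _ _ (ltn_ord x) (ltn_ord y))/eqP.
by rewrite -[L x](ord_extendE (iota 0 m)); apply: g_L.
Qed.

Lemma P_list_le1_of_nat (L : nat -> seq nat) :
    (forall g1 g2, nat_list_coloring L g1 -> nat_list_coloring L g2 ->
       forall a, a < n -> g1 a = g2 a) ->
  P_list adj (fun x : 'I_n => L x) <= 1.
Proof.
move=> coloring_unique; apply/card_le1_eqP => f1 f2; rewrite !inE.
have lift (f : {ffun 'I_n -> 'I_(bound (fun x : 'I_n => L x))}) :
    properb adj f && [forall x, val (f x) \in L x] ->
  nat_list_coloring L (ord_extend 0 (fun x => val (f x))).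
  case/andP => /properbP f_proper /forallP f_L; split=> [a b a_lt b_lt|a a_lt].
    rewrite -[a]/(val (Ordinal a_lt)) -[b]/(val (Ordinal b_lt)) !ord_extendE -adjE.
    by move=> /f_proper fab; rewrite val_eqE; apply/eqP.
  by rewrite -[a]/(val (Ordinal a_lt)) ord_extendE; apply: f_L.
move=> /lift col1 /lift col2; apply/ffunP => x; apply: val_inj.
by have := coloring_unique _ _ col1 col2 x (ltn_ord x); rewrite !ord_extendE.
Qed.

End NatLabelledGraph.

Definition other (l : seq nat) (x : nat) : nat := head x [seq y <- l | y != x].

Lemma size2_pair (l : seq nat) :
  uniq l -> size l = 2 -> exists x y, l = [:: x; y] /\ x != y.
Proof.
by case: l => [|x [|y []]] //= /andP[]; rewrite inE => x_neq_y _ _; exists x, y.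
Qed.

Lemma other_spec (l : seq nat) x :
  uniq l -> size l = 2 -> x \in l -> other l x \in l /\ other l x != x.
Proof.
move=> l_uniq /(size2_pair l_uniq) [y [z [-> y_neq_z]]].
have z_neq_y : z != y by rewrite eq_sym.
rewrite /other !inE => /orP[] /eqP-> /=.
  by rewrite eqxx /= z_neq_y /= !eqxx orbT.
by rewrite eqxx /= y_neq_z /= !eqxx.
Qed.

Lemma other_eq (l : seq nat) x y :
  uniq l -> size l = 2 -> x \in l -> y \in l -> y != x -> other l x = y.
Proof.
move=> l_uniq /(size2_pair l_uniq) [u [v [-> u_neq_v]]].
rewrite /other !inE => /orP[] /eqP-> /orP[] /eqP-> //=; rewrite ?eqxx //=.
  by rewrite eq_sym u_neq_v.
by rewrite u_neq_v.
Qed.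

Lemma exists_neq_size2 (l : seq nat) e :
  uniq l -> size l = 2 -> exists2 d, d \in l & d != e.
Proof.
move=> l_uniq /(size2_pair l_uniq) [y [z [-> y_neq_z]]].
have [<-|y_neq_e] := eqVneq y e; last by exists y; rewrite ?inE ?eqxx.
by exists z; rewrite ?inE ?eqxx ?orbT // eq_sym.
Qed.

Section ForcedColors.
Variable L : nat -> seq nat.
Hypothesis L2 : forall i, uniq (L i) /\ size (L i) = 2.

(* [forced c i = Some x] iff every L-coloring of the path 0, 1, ..., i that
   gives color c to 0 gives color x to i; otherwise both colors of [L i]
   occur at i. *)
Fixpoint forced (c i : nat) : option nat :=
  if i is j.+1 then
    if forced c j is Some x then
      if x \in L j.+1 then Some (other (L j.+1) x) else None
    else None
  else Some c.

Definition reachable (c i d : nat) : bool :=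
  if forced c i is Some x then d == x else d \in L i.

Definition path_coloring (col : nat -> nat) (j : nat) : Prop :=
  forall i, 0 < i <= j -> col i \in L i /\ col i.-1 != col i.

Lemma forced_swap s t i x y :
    s != t -> forced s i = Some x -> forced t i = Some y ->
  (x, y) = if odd i then (t, s) else (s, t).
Proof.
move=> s_neq_t; elim: i x y => [|i IHi] x y /=; first by move=> [<-] [<-].
case Es: (forced s i) => [x0|] //; case Et: (forced t i) => [y0|] //.
case: ifP => // x0_in [<-]; case: ifP => // y0_in [<-].
have x0y0 := IHi _ _ Es Et.
have y0_neq_x0 : y0 != x0.
  by move: x0y0; case: (odd i) => -[-> ->]; rewrite // eq_sym.
have [uniq_L size_L] := L2 i.+1.
rewrite (other_eq uniq_L size_L x0_in y0_in) //.
rewrite (other_eq uniq_L size_L y0_in x0_in) 1?eq_sym //.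
by move: x0y0; case: (odd i) => -[-> ->].
Qed.

Lemma reachable_neq c i e :
  forced c i != Some e -> exists2 d, reachable c i d & d != e.
Proof.
rewrite /reachable; case: (forced c i) => [x|] x_neq_e; first by exists x.
by have [uniq_L size_L] := L2 i; apply: exists_neq_size2.
Qed.

Lemma reachableS c i d :
  reachable c i.+1 d -> d \in L i.+1 /\ forced c i != Some d.
Proof.
rewrite /reachable /=; case: (forced c i) => [x|] //.
have [uniq_L size_L] := L2 i.+1.
case: ifP => [x_in /eqP->|x_notin d_in].
  by have [? ?] := other_spec uniq_L size_L x_in; rewrite eq_sym.
by split=> //; apply: contraFneq x_notin => -[->].
Qed.

Lemma reachable_coloring c j d :
  reachable c j d -> exists col, [/\ col 0 = c, col j = d & path_coloring col j].
Proof.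
elim: j d => [|j IHj] d.
  by rewrite /reachable /= => /eqP->; exists (fun=> c); split=> // -[|i].
case/reachableS => d_in /reachable_neq[d' /IHj[col [col0 colj walk]] d'_neq_d].
exists (fun i => if i == j.+1 then d else col i); split=> //=; first by rewrite eqxx.
move=> i /andP[i_gt0]; rewrite leq_eqVlt => /orP[/eqP->|i_le_j].
  by rewrite eqxx /= (ltn_eqF (ltnSn j)) colj.
by rewrite !ifN; first apply: walk; lia.
Qed.

Lemma path_coloring_forced c col j x :
  col 0 = c -> path_coloring col j -> forced c j = Some x -> col j = x.
Proof.
move=> col0; elim: j x => [|j IHj] x walk /=; first by move=> [<-].
case Ej: (forced c j) => [x0|] //; case: ifP => // x0_in [<-].
have [colS_in colj_neq] := walk j.+1 (leqnn _).
have colj : col j = x0.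
  by apply: IHj Ej => i /andP[i_gt0 i_le]; apply: walk; rewrite i_gt0 ltnW.
have [uniq_L size_L] := L2 j.+1.
by rewrite (other_eq uniq_L size_L x0_in colS_in) // -colj eq_sym.
Qed.

Lemma path_coloring_ends c e N :
    0 < N -> forced c N.-1 != Some e ->
  exists col, [/\ col 0 = c, col N = e,
    forall i, 0 < i < N -> col i \in L i &
    forall i, 0 < i <= N -> col i.-1 != col i].
Proof.
case: N => // N _ /reachable_neq[d /reachable_coloring[col [col0 colN walk]] d_neq_e].
exists (fun i => if i == N.+1 then e else col i).
split=> [||i|i] //=; first by rewrite eqxx.
  move=> i_lt; have [|i_in _] := walk i; first lia.
  by rewrite ifN //; lia.
move=> /andP[i_gt0]; rewrite leq_eqVlt => /orP[/eqP->|i_le_N].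
  by rewrite eqxx /= (ltn_eqF (ltnSn N)) colN.
have [|_ col_neq] := walk i; first lia.
by rewrite !ifN //; lia.
Qed.

End ForcedColors.

Lemma mem_zip_behead_map_iota (f : nat -> nat) m N a b :
  ((a, b) \in zip (map f (iota m N.+1)) (behead (map f (iota m N.+1)))) =
  has (fun i => (a == f i) && (b == f i.+1)) (iota m N).
Proof. by elim: N m => [|N IHN] m //=; rewrite in_cons IHN xpair_eqE. Qed.

Definition avoids (l : seq nat) (x y : nat) : bool :=
  has (fun c => (c != x) && (c != y)) l.

Lemma avoids_pair a1 a2 x y : a1 != a2 ->
  avoids [:: a1; a2] x y = ~~ ((x == a1) && (y == a2) || (x == a2) && (y == a1)).
Proof. by rewrite /avoids /=; lia. Qed.

Section Theta.
Variable k : nat.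
Hypothesis k_gt0 : 0 < k.

Local Notation n := (2 + 2 + 2 * k - 1).
Local Notation e := (theta_edge_nat 2 2 (2 * k)).

Definition spine (i : nat) : nat :=
  if i == 0 then 0 else if i == 2 * k then 1 else i + 3.

Definition spine_pos (a : nat) : nat :=
  if a == 0 then 0 else if a == 1 then 2 * k else a - 3.

Lemma spineK i : i <= 2 * k -> spine_pos (spine i) = i.
Proof.
rewrite /spine; have [->|i_neq0] := eqVneq i 0 => // i_le.
have [->|i_neq] := eqVneq i (2 * k) => //.
by rewrite /spine_pos !ifN; lia.
Qed.

Lemma spine_posK a : a < n -> a != 2 -> a != 3 -> spine (spine_pos a) = a.
Proof.
move=> a_lt a_neq2 a_neq3; rewrite /spine_pos /spine.
have [->|a_neq0] := eqVneq a 0 => //.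
have [->|a_neq1] := eqVneq a 1; first by rewrite eqxx ifN //; lia.
by rewrite !ifN; lia.
Qed.

Lemma spine_last : spine (2 * k) = 1.
Proof. by rewrite /spine eqxx ifN //; lia. Qed.

Lemma spine_lt i : i <= 2 * k -> spine i < n.
Proof. by rewrite /spine; case: ifP => [_|/negbT ?]; [|case: ifP => [_|/negbT ?]]; lia. Qed.

Lemma spine_pathE : 0 :: rcons (iota 4 (2 * k).-1) 1 = map spine (iota 0 (2 * k).+1).
Proof.
have -> : (2 * k).+1 = 1 + (2 * k).-1 + 1 by lia.
rewrite !iotaD !map_cat -cats1 /= -[4]/(3 + 1) iotaDl.
have -> : 0 + (1 + (2 * k).-1) = 2 * k by lia.
congr (_ :: _ ++ [:: _]); last by rewrite spine_last.
by apply/eq_in_map => i; rewrite mem_iota => i_range; rewrite /spine !ifN; lia.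
Qed.

Definition theta_arc (a b : nat) : bool :=
  has (fun p => (a, b) \in zip p (behead p)) (theta_paths 2 2 (2 * k)).

Lemma theta_edgeE a b : e a b = theta_arc a b || theta_arc b a.
Proof. exact: has_predU. Qed.

Lemma spine_arcE a b :
  ((a, b) \in zip (0 :: rcons (iota 4 (2 * k).-1) 1) (rcons (iota 4 (2 * k).-1) 1)) =
  has (fun i => (a == spine i) && (b == spine i.+1)) (iota 0 (2 * k)).
Proof.
rewrite -[X in zip _ X]/(behead (0 :: rcons (iota 4 (2 * k).-1) 1)) spine_pathE.
exact: mem_zip_behead_map_iota.
Qed.

Lemma theta_arcE a b : theta_arc a b =
  [|| (a == 0) && (b == 2), (a == 2) && (b == 1), (a == 0) && (b == 3),
      (a == 3) && (b == 1) |
      has (fun i => (a == spine i) && (b == spine i.+1)) (iota 0 (2 * k))].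
Proof.
rewrite /theta_arc /theta_paths /= spine_arcE !inE !xpair_eqE.
by rewrite orbF !orbA.
Qed.

Lemma theta_arc_spine i : i < 2 * k -> theta_arc (spine i) (spine i.+1).
Proof.
move=> i_lt; rewrite theta_arcE; apply/or4P/Or44/orP; right.
by apply/hasP; exists i; rewrite ?mem_iota ?eqxx.
Qed.

Definition theta_col T (c2 c3 : T) (col : nat -> T) (a : nat) : T :=
  if a == 2 then c2 else if a == 3 then c3 else col (spine_pos a).

Lemma theta_col_spine T (c2 c3 : T) col i :
  i <= 2 * k -> theta_col c2 c3 col (spine i) = col i.
Proof.
have /andP[spine_neq2 spine_neq3] : (spine i != 2) && (spine i != 3).
  by rewrite /spine; case: ifP => // /negbT i_neq0; case: ifP => // _; lia.
by move=> i_le; rewrite /theta_col !ifN // spineK.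
Qed.

Lemma theta_col_proper (T : eqType) (c2 c3 : T) col :
    c2 != col 0 -> c2 != col (2 * k) -> c3 != col 0 -> c3 != col (2 * k) ->
    (forall i, i < 2 * k -> col i != col i.+1) ->
  forall a b, e a b -> theta_col c2 c3 col a != theta_col c2 c3 col b.
Proof.
move=> c2_col0 c2_col2k c3_col0 c3_col2k col_neq.
suff arc a b : theta_arc a b -> theta_col c2 c3 col a != theta_col c2 c3 col b.
  by move=> a b; rewrite theta_edgeE => /orP[/arc|/arc]; rewrite // eq_sym.
rewrite theta_arcE => /or4P[| | |/orP[|/hasP[i]]];
  try by case/andP => /eqP-> /eqP->; rewrite // eq_sym.
rewrite mem_iota => /andP[_ i_lt] /andP[/eqP-> /eqP->].
by rewrite !theta_col_spine ?col_neq //; lia.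
Qed.

Lemma theta_vertexP a :
  a < n -> [\/ a = 2, a = 3 | exists2 i, i <= 2 * k & a = spine i].
Proof.
move=> a_lt; have [->|a_neq2] := eqVneq a 2; first by constructor 1.
have [->|a_neq3] := eqVneq a 3; first by constructor 2.
constructor 3; exists (spine_pos a); last by rewrite spine_posK.
by rewrite /spine_pos; case: ifP => _; [|case: ifP => _]; lia.
Qed.

Lemma theta_chrom_poly2 : 1 < chrom_poly (theta_adj 2 2 (2 * k)) 2.
Proof.
have n_gt0 : 0 < n by lia.
apply: (@chrom_poly2_gt1 _ _ (fun x => theta_col true true odd (val x)) (Ordinal n_gt0)).
move=> x y xy; apply/eqP; apply: theta_col_proper xy => //=; rewrite ?oddM // => i _.
by case: (odd i).
Qed.

Lemma theta_chi : chi (theta_adj 2 2 (2 * k)) = 2.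
Proof.
have [n_gt0 n_gt2] : 0 < n /\ 2 < n by lia.
apply: (@chi_eq2 _ _ (Ordinal n_gt0) (Ordinal n_gt2)); last exact: ltnW theta_chrom_poly2.
by rewrite /theta_adj /= theta_edgeE theta_arcE.
Qed.

Section Choosability.
Variable L : nat -> seq nat.
Hypothesis L2 : forall a, uniq (L a) /\ size (L a) = 2.

Local Notation Lspine := (fun i => L (spine i)).

Let Lspine2 i : uniq (Lspine i) /\ size (Lspine i) = 2. Proof. exact: L2. Qed.

(* L 2 and L 3 only forbid pairs (cu, cv) with {cu, cv} equal to them, and the
   path forbids at most one cv for each cu.  If L 0 = L 1 = {s, t}, the pairs
   (s, s) and (t, t) are forbidden only by the path, and not both; otherwise
   each of the three constraints forbids at most one of the four pairs. *)
Lemma theta_end_colors : exists cu cv,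
  [/\ cu \in L 0, cv \in L 1, avoids (L 2) cu cv, avoids (L 3) cu cv &
       forced Lspine cu (2 * k).-1 != Some cv].
Proof.
have [s [t [L0E s_neq_t]]] := size2_pair (L2 0).1 (L2 0).2.
have [w1 [w2 [L1E w1_neq_w2]]] := size2_pair (L2 1).1 (L2 1).2.
have [a1 [a2 [L2E a1_neq_a2]]] := size2_pair (L2 2).1 (L2 2).2.
have [b1 [b2 [L3E b1_neq_b2]]] := size2_pair (L2 3).1 (L2 3).2.
pose G c := forced Lspine c (2 * k).-1.
have G_swap x y : G s = Some x -> G t = Some y -> x = t /\ y = s.
  move=> Gs Gt; have := forced_swap Lspine2 s_neq_t Gs Gt.
  have -> : (2 * k).-1 = (k.-1).*2.+1 by rewrite -muln2; lia.
  by rewrite /= odd_double => -[-> ->].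
pose ok cu cv := [&& avoids (L 2) cu cv, avoids (L 3) cu cv & G cu != Some cv].
suff : [|| ok s w1, ok s w2, ok t w1 | ok t w2].
  case/or4P => /and3P[? ? ?]; [exists s, w1 | exists s, w2 | exists t, w1 | exists t, w2];
  by split; rewrite // ?L0E ?L1E !inE eqxx ?orbT.
move: G_swap; rewrite /ok L2E L3E !avoids_pair //.
case: (G s) => [x|]; case: (G t) => [y|] => G_swap; rewrite /= ?(inj_eq Some_inj).
  by have [-> ->] := G_swap _ _ erefl erefl; lia.
all: lia.
Qed.

Lemma theta_choosable_nat : exists g, nat_list_coloring n e L g.
Proof.
have [cu [cv [cu_in cv_in]]] := theta_end_colors.
move=> /hasP[c2 c2_in /andP[c2_cu c2_cv]] /hasP[c3 c3_in /andP[c3_cu c3_cv]] cucv_ok.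
have [|col [col0 col2k col_in col_neq]] := path_coloring_ends Lspine2 _ cucv_ok; first lia.
have col_L i : i <= 2 * k -> col i \in L (spine i).
  rewrite leq_eqVlt => /orP[/eqP->|i_lt]; first by rewrite spine_last col2k.
  have [->|i_gt0] := posnP i; first by rewrite col0.
  by apply: col_in; rewrite i_gt0.
exists (theta_col c2 c3 col); split=> [a b _ _|a].
  apply: theta_col_proper; rewrite ?col0 ?col2k // => i i_lt.
  by apply: col_neq; rewrite i_lt.
by case/theta_vertexP=> [->|->|[i i_le ->]]; rewrite ?theta_col_spine ?col_L.
Qed.

End Choosability.

Lemma theta_choosable : choosable (theta_adj 2 2 (2 * k)) 2.
Proof.
apply: (@choosable_of_nat _ e _ (fun _ _ => erefl)) => L L2.
exact: theta_choosable_nat.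
Qed.

End Theta.

Section Forcing.
Variable k : nat.
Hypothesis k_gt1 : 1 < k.
Let k_gt0 : 0 < k := ltnW k_gt1.

Local Notation n := (2 + 2 + 2 * k - 1).
Local Notation e := (theta_edge_nat 2 2 (2 * k)).

Definition forcing_lists (a : nat) : seq nat :=
  if a == 1 then [:: 0; 2] else if a == 3 then [:: 1; 2] else if a <= 4 then [:: 0; 1]
  else if a == 2 * k + 2 then [:: 0; 2] else [:: 1; 2].

Lemma forcing_lists2 a : uniq (forcing_lists a) /\ size (forcing_lists a) = 2.
Proof. by rewrite /forcing_lists; repeat case: ifP. Qed.

Lemma forcing_lists_gt4 a :
  4 < a -> forcing_lists a = if a == 2 * k + 2 then [:: 0; 2] else [:: 1; 2].
Proof.
move=> a_gt4; rewrite /forcing_lists.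
have [-> -> ->] : [/\ (a == 1) = false, (a == 3) = false & (a <= 4) = false].
  by split; lia.
by [].
Qed.

Local Notation Lspine := (fun i => forcing_lists (spine k i)).

Let Lspine2 i : uniq (Lspine i) /\ size (Lspine i) = 2. Proof. exact: forcing_lists2. Qed.

Lemma forced_forcing_lists i : 0 < i < 2 * k ->
  forced Lspine 0 i = Some (if i == (2 * k).-1 then 0 else if odd i then 1 else 2).
Proof.
elim: i => [//|i IHi] /andP[_ i_lt].
have spineS : spine k i.+1 = i + 4 by rewrite /spine !ifN; lia.
rewrite [LHS]/= spineS.
have [->|i_gt0] := posnP i; first by rewrite ifN //; lia.
rewrite IHi; last lia.
have -> : (i == (2 * k).-1) = false by lia.
rewrite /= forcing_lists_gt4; last lia.
have -> : (i + 4 == 2 * k + 2) = (i.+1 == (2 * k).-1) by lia.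
have [i_last|_] := eqVneq i.+1 (2 * k).-1; last by case: (odd i).
by rewrite (_ : i = (k.-1).*2) ?odd_double //; rewrite -muln2; lia.
Qed.

Lemma forcing_lists_coloring g : nat_list_coloring n e forcing_lists g ->
  [/\ g 1 = 2, g 2 = 1, g 3 = 1 &
       forall i, i < 2 * k -> forced Lspine 0 i = Some (g (spine k i))].
Proof.
case=> g_proper g_in.
have g_arc a b : a < n -> b < n -> theta_arc k a b -> g a != g b.
  by move=> a_lt b_lt ab; apply: g_proper; rewrite // theta_edgeE ab.
have g_spine i : i < 2 * k -> g (spine k i) != g (spine k i.+1).
  by move=> i_lt; apply: g_arc; rewrite ?spine_lt ?theta_arc_spine //; lia.
have [g02 g21 g03 g31] : [/\ g 0 != g 2, g 2 != g 1, g 0 != g 3 & g 3 != g 1].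
  by split; apply: g_arc; rewrite ?theta_arcE //; lia.
have [g0_in g1_in g2_in g3_in] :
    [/\ g 0 \in [:: 0; 1], g 1 \in [:: 0; 2], g 2 \in [:: 0; 1] & g 3 \in [:: 1; 2]].
  by split; apply: g_in; lia.
have g0 : g 0 = 0 by move: g0_in g1_in g2_in g3_in; rewrite !inE; lia.
have walk j : j < 2 * k -> path_coloring Lspine (fun i => g (spine k i)) j.
  move=> j_lt i /andP[i_gt0 i_le]; split; first by apply: g_in; apply: spine_lt; lia.
  by rewrite -{2}(prednK i_gt0); apply: g_spine; lia.
have g_forced i : i < 2 * k -> forced Lspine 0 i = Some (g (spine k i)).
  move=> i_lt; have [->|i_gt0] := posnP i; first by rewrite g0.
  have forced_i := forced_forcing_lists (_ : 0 < i < 2 * k); rewrite forced_i ?i_gt0 //.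
  by rewrite (path_coloring_forced Lspine2 g0 (walk i i_lt) (forced_i _)) ?i_gt0.
have [g_end] : Some (g (spine k (2 * k).-1)) = Some 0.
  by rewrite -g_forced ?forced_forcing_lists ?eqxx //; lia.
have g1 : g 1 = 2.
  have := g_spine (2 * k).-1; rewrite prednK ?spine_last ?g_end //; last lia.
  by move=> /(_ (leqnn _)); move: g1_in; rewrite !inE; lia.
by split=> //; [move: g2_in | move: g3_in]; rewrite !inE; lia.
Qed.

Lemma forcing_lists_unique g1 g2 :
    nat_list_coloring n e forcing_lists g1 -> nat_list_coloring n e forcing_lists g2 ->
  forall a, a < n -> g1 a = g2 a.
Proof.
move=> /forcing_lists_coloring[g1_1 g1_2 g1_3 g1_forced].
move=> /forcing_lists_coloring[g2_1 g2_2 g2_3 g2_forced].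
move=> a /(theta_vertexP k_gt0)[->|->|[i]]; rewrite ?g1_2 ?g2_2 ?g1_3 ?g2_3 //.
rewrite leq_eqVlt => /orP[/eqP-> ->|i_lt ->]; first by rewrite spine_last ?g1_1 ?g2_1.
by have := g1_forced i i_lt; rewrite g2_forced // => -[].
Qed.

Lemma theta_P_list_le1 :
  P_list (theta_adj 2 2 (2 * k)) (fun x => forcing_lists (val x)) <= 1.
Proof. exact: (@P_list_le1_of_nat _ e _ (fun _ _ => erefl) _ forcing_lists_unique). Qed.

End Forcing.

Theorem lemma13 (k : nat) (hk : 2 <= k) :
  chromatic_choosable (theta_adj 2 2 (2 * k)) /\
  ~ weakly_enum_chromatic_choosable (theta_adj 2 2 (2 * k)).
Proof.
have k_gt0 : 0 < k by apply: leq_trans hk.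
have chi2 := theta_chi k_gt0.
split; first by apply: chromatic_choosable_of_choosable; rewrite chi2; exact: theta_choosable.
apply: (not_weakly_enum_chromatic_choosable (L := fun x => forcing_lists k (val x))).
  by rewrite chi2 => x; exact: forcing_lists2.
by rewrite chi2; exact: leq_ltn_trans (theta_P_list_le1 hk) (theta_chrom_poly2 k_gt0).
Qed.
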